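(* Let $k$ and $n$ be integers with $n\geqslant 9$ and $n>k \geqslant e \ln n+e$. Then for every $i\in\{1,2,\ldots,n\}$, the number \[ S(n,i,k)=\sum_{\substack{1 \leqslant i_1<i_2<\cdots<i_k \leqslant n,\\ i_j \neq i \text{ for } j=1,2,\ldots,k}} \frac{1}{i_1 i_2 \cdots i_k} \] is not an integer.
   Context: For integers $n,i,k$ with $1\leqslant k<n$ and $1\leqslant i\leqslant n$, $S(n,i,k)$ denotes the $k$-th elementary symmetric function of the $n-1$ numbers $\{1,1/2,\ldots,1/n\}\setminus\{1/i\}$. Here $e$ is Euler's number and $\ln$ the natural logarithm. *)

From mathcomp Require Import all_boot all_order all_algebra.
From Stdlib Require Import Reals.
Set Implicit Arguments. Unset Strict Implicit. Unset Printing Implicit Defensive.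
Import Order.TTheory GRing.Theory Num.Theory.
Local Open Scope ring_scope.

(* S n i k : the k-th elementary symmetric function of {1, 1/2, ..., 1/n} \ {1/i},
   computed in rat. Indices j : 'I_n stand for the integer j+1; i is the integer
   1 <= i <= n (the excluded index). *)
Definition S (n i k : nat) : rat :=
  \sum_(A : {set 'I_n} | (#|A| == k)%N && [forall j in A, (j.+1 != i)%N])
     \prod_(j in A) ((j.+1)%:R)^-1.

From mathcomp Require Import all_boot all_order all_algebra.
From Stdlib Require Import Reals.
From mathcomp Require Import zify Rstruct.

Set Implicit Arguments.
Unset Strict Implicit.
Unset Printing Implicit Defensive.
Import Order.TTheory GRing.Theory Num.Theory.

(* Put x_j = 1/j for j <> i and x_i = 0, so that S(n,i,k) is the k-th
   elementary symmetric function e_k(x).  It is positive because k < n leaves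
   enough admissible indices.  For t >= 0,
     t^k e_k(x) <= prod_j (1 + t x_j) <= exp (t sum_j x_j),
   and sum_j x_j < H_n <= 1 + ln n =: c.  With t = k/c >= e this gives
   t^k e_k(x) < e^k <= t^k, hence 0 < S(n,i,k) < 1. *)

Local Open Scope ring_scope.

Lemma ln_le_subr1 (y : R) : 0 < y -> ln y <= y - 1.
Proof.
move=> /RltP y_gt0; rewrite lerBrDl.
by have /RleP := exp_ineq1_le (ln y); rewrite exp_ln.
Qed.

Lemma invS_le_ln_sub (m : R) : 0 < m -> (m + 1)^-1 <= ln (m + 1) - ln m.
Proof.
move=> m_gt0; have m1_gt0 : 0 < m + 1 by rewrite addr_gt0.
have := ln_le_subr1 (divr_gt0 m_gt0 m1_gt0).
rewrite ln_mult ?ln_Rinv; try exact/RltP; try by apply/RltP; rewrite invr_gt0.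
have -> : m / (m + 1) - 1 = - (m + 1)^-1.
  rewrite -[X in _ - X](divff (lt0r_neq0 m1_gt0)) -mulrBl.
  by rewrite opprD addrA subrr add0r mulN1r.
by rewrite lerNr opprB.
Qed.

Lemma harmonic_le_ln (n : nat) : (0 < n)%nat ->
  \sum_(j < n) (j.+1%:R : R)^-1 <= 1 + ln (n%:R).
Proof.
elim: n => [//|[|n] IH] _.
  by rewrite big_ord1 invr1 ln_1 addr0.
rewrite big_ord_recr /= -[n.+2%:R]natr1.
have := lerD (IH isT) (invS_le_ln_sub (ltr0Sn R n)).
by rewrite addrA addrAC addrK.
Qed.

Definition esym (I : finType) (k : nat) (x : I -> R) : R :=
  \sum_(A : {set I} | #|A| == k) \prod_(j in A) x j.

Lemma exp_sum (I : finType) (x : I -> R) :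
  exp (\sum_j x j) = \prod_j exp (x j).
Proof. by apply: (big_morph exp) => [u v|]; rewrite ?expR0 // expRD. Qed.

Lemma esymZ (I : finType) (k : nat) (t : R) (x : I -> R) :
  t ^+ k * esym k x = esym k (fun j => t * x j).
Proof.
rewrite mulr_sumr; apply: eq_bigr => A /eqP cardA.
by rewrite big_split /= prodr_const cardA.
Qed.

Section NonnegativeWeights.
Variables (I : finType) (x : I -> R).
Hypothesis x_ge0 : forall j, 0 <= x j.

Lemma esym_le_prod_add1 k : esym k x <= \prod_j (1 + x j).
Proof.
under eq_bigr do rewrite addrC.
rewrite (bigA_distr 1 +%R x (fun=> 1)) /esym.
rewrite [leRHS]big_mkcond [leLHS]big_mkcond /=.
apply: ler_sum => A _; rewrite (big_mkcond (mem A)) /=.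
have prod_ge0 : 0 <= \prod_j (if j \in A then x j else 1).
  by apply: prodr_ge0 => j _; case: ifP.
by case: ifP.
Qed.

Lemma esym_le_exp k : esym k x <= exp (\sum_j x j).
Proof.
apply: le_trans (esym_le_prod_add1 k) _; rewrite exp_sum.
apply: ler_prod => j _; rewrite addr_ge0 ?x_ge0 //=.
exact/RleP/exp_ineq1_le.
Qed.

Lemma esym_gt0 k : (k <= #|[set j | x j \is Num.pos]|)%nat -> 0 < esym k x.
Proof.
case/card_geqP=> s [uniq_s size_s s_pos].
have cardA : #|[set j in s]| == k by rewrite cardsE (card_uniqP uniq_s) size_s.
rewrite /esym (bigD1 [set j in s]) //= ltr_pwDl ?prodr_gt0 //.
  by move=> j; rewrite inE => /s_pos; rewrite inE posrE.
by apply: sumr_ge0 => A _; apply: prodr_ge0 => j _.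
Qed.

End NonnegativeWeights.

Lemma esym_lt1 (I : finType) (x : I -> R) (c : R) k :
  (forall j, 0 <= x j) -> \sum_j x j < c -> exp 1 * c <= k%:R ->
  esym k x < 1.
Proof.
move=> x_ge0 sum_lt_c kc.
have c_gt0 : 0 < c by apply: le_lt_trans sum_lt_c; apply: sumr_ge0.
pose t := k%:R / c.
have e_le_t : exp 1 <= t by rewrite ler_pdivlMr.
have e_gt0 : 0 < exp 1 by apply/RltP/exp_pos.
have t_gt0 : 0 < t := lt_le_trans e_gt0 e_le_t.
have tk_gt0 : 0 < t ^+ k by rewrite exprn_gt0.
rewrite -(ltr_pM2l tk_gt0) mulr1 esymZ.
apply: le_lt_trans (esym_le_exp _ k) _.
  by move=> j; rewrite mulr_ge0 ?x_ge0 ?ltW.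
apply: lt_le_trans (_ : exp k%:R <= _).
  rewrite -mulr_sumr; apply/RltP/exp_increasing/RltP.
  by rewrite -[k%:R](divfK (lt0r_neq0 c_gt0)) ltr_pM2l.
rewrite -[k%:R]mulr1 mulr_natl -expRX.
by apply: lerXn2r; rewrite ?nnegrE ?(ltW e_gt0) ?(ltW t_gt0).
Qed.

Definition harmonic_but (n : nat) (i0 : 'I_n) (j : 'I_n) : R :=
  if j == i0 then 0 else (j.+1%:R)^-1.

Section HarmonicWeights.
Variables (n : nat) (i0 : 'I_n).

Lemma harmonic_but_ge0 j : 0 <= harmonic_but i0 j.
Proof. by rewrite /harmonic_but; case: ifP; rewrite ?invr_ge0. Qed.

Lemma ratr_S_esym k : ratr (S n i0.+1 k) = esym k (harmonic_but i0).
Proof.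
rewrite /S rmorph_sum /esym big_mkcondr /=; apply: eq_bigr => A _.
case: ifP => [/forall_inP avoid_i0 | /forall_inPn[j jA]].
  rewrite rmorph_prod; apply: eq_bigr => j /avoid_i0 ji0.
  rewrite /harmonic_but ifF ?fmorphV /= ?ratr_nat //.
  by move: ji0; apply: contraNF => /eqP ->.
rewrite negbK eqSS => /eqP/val_inj j_i0.
by rewrite [RHS](bigD1 j) //= /harmonic_but j_i0 eqxx mul0r.
Qed.

Lemma harmonic_but_sum_lt : \sum_j harmonic_but i0 j < 1 + ln n%:R.
Proof.
apply: lt_le_trans (harmonic_le_ln (leq_ltn_trans (leq0n _) (ltn_ord i0))).
rewrite (bigD1 i0) // [ltRHS](bigD1 i0) //= /harmonic_but eqxx add0r.
rewrite ltr_pwDl ?invr_gt0 ?ltr0Sn //; apply: ler_sum => j /negPf ->.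
exact: lexx.
Qed.

Lemma card_harmonic_but_pos :
  (n.-1 <= #|[set j | harmonic_but i0 j \is Num.pos]|)%nat.
Proof.
rewrite -[n in n.-1]card_ord -(cardsC1 i0); apply/subset_leq_card/subsetP => j.
by rewrite !inE /harmonic_but => /negPf ->; rewrite posrE invr_gt0 ltr0Sn.
Qed.

Lemma ratr_S_gt0 k : (k < n)%nat -> 0 < ratr (S n i0.+1 k) :> R.
Proof.
move=> lt_kn; rewrite ratr_S_esym esym_gt0 //; first exact: harmonic_but_ge0.
by apply: leq_trans (card_harmonic_but_pos); lia.
Qed.

Lemma ratr_S_lt1 k :
  exp 1 * (1 + ln n%:R) <= k%:R -> ratr (S n i0.+1 k) < 1 :> R.
Proof.
rewrite ratr_S_esym; apply: esym_lt1 harmonic_but_sum_lt.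
exact: harmonic_but_ge0.
Qed.

End HarmonicWeights.

Local Close Scope ring_scope.

Theorem lemma2p3 (n k i : nat) :
  (9 <= n)%N -> (k < n)%N ->
  (exp 1 * ln (INR n) + exp 1 <= INR k)%R ->
  (1 <= i <= n)%N ->
  ~ (S n i k \is a Num.int).
Proof.
move=> _ lt_kn /RleP ek_le_k; case: i => // i /andP[_ lt_in] /intrP[m Sm].
pose i0 := Ordinal lt_in; change i with (nat_of_ord i0) in Sm.
have := ratr_S_lt1 i0 (k := k).
rewrite mulrDr mulr1 addrC -RmultE -RplusE -!INRE => /(_ ek_le_k).
move: (ratr_S_gt0 i0 lt_kn).
by rewrite Sm ratr_int ltr0z ltrz1; lia.
Qed.
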